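(* (1) If $t\in\mathtt m$, then there exist an environment $\Gamma$ and a type $\sigma$ such that $\Gamma\vdash t:\sigma$ is derivable in $\cap J$. (2) If $t\in\mathtt m_{var}$, then for every type $\sigma$ there exists an environment $\Gamma$ such that $\Gamma\vdash t:\sigma$ is derivable in $\cap J$.
   Context: Terms $\mathtt T_J$: $t,u,r ::= x \mid \lambda x.t \mid t(u,y.r)$ ($y$ bound in $r$), up to $\alpha$-equivalence. The sets $\mathtt m_{var}$ and $\mathtt m$ are generated by $\mathtt m_{var} ::= x \mid \mathtt m_{var}(\mathtt m, y.\mathtt m_{var})$ and $\mathtt m ::= x \mid \lambda x.\mathtt m \mid \mathtt m_{var}(\mathtt m, y.\mathtt m)$. System $\cap J$: types $\sigma,\tau ::= \alpha \mid \mathcal M\to\sigma$, $\mathcal M=[\sigma_i]_{i\in I}$ a finite possibly empty multiset; $\sqcup$ multiset union; environments map variables to multisets, $\wedge$ pointwise union, $\Gamma;x:\mathcal M$ extension with $x\notin\mathrm{dom}\,\Gamma$. $\mathrm{ch}(\mathcal M)=\mathcal M$ if $\mathcal M\ne[\,]$, $\mathrm{ch}([\,])=[\tau]$ for an arbitrary $\tau$. Rules: (var) $x:[\sigma]\vdash x:\sigma$; (abs) from $\Gamma;x:\mathcal M\vdash t:\sigma$ infer $\Gamma\vdash\lambda x.t:\mathcal M\to\sigma$; (many) from $(\Gamma_i\vdash t:\sigma_i)_{i\in I}$, $I\ne\emptyset$, infer $\wedge_i\Gamma_i\vdash t:[\sigma_i]_{i\in I}$; (app) from $\Gamma\vdash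 t:\mathrm{ch}([\mathcal M_i\to\tau_i]_{i\in I})$, $\Delta\vdash u:\mathrm{ch}(\sqcup_i\mathcal M_i)$, $\Lambda;y:[\tau_i]_{i\in I}\vdash r:\sigma$ infer $\Gamma\wedge\Delta\wedge\Lambda\vdash t(u,y.r):\sigma$. *)

From Stdlib Require Import List Arith PeanoNat.
Import ListNotations.

Definition var := nat.

Inductive term : Type :=
| Var : var -> term
| Lam : var -> term -> term
| GApp : term -> term -> var -> term -> term.   (* GApp t u y r = t(u, y.r) *)

Inductive is_mvar : term -> Prop :=
| mvar_var : forall x, is_mvar (Var x)
| mvar_app : forall t u y r,
    is_mvar t -> is_m u -> is_mvar r -> is_mvar (GApp t u y r)
with is_m : term -> Prop :=
| m_var : forall x, is_m (Var x)
| m_lam : forall x t, is_m t -> is_m (Lam x t)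
| m_app : forall t u y r,
    is_mvar t -> is_m u -> is_m r -> is_m (GApp t u y r).

(* Types; multisets are represented by lists, considered up to the
   (deep) permutation equivalence teq / mteq below. *)
Inductive ty : Type :=
| TAtom : nat -> ty
| TArr : list ty -> ty -> ty.

Definition mset := list ty.

Inductive teq : ty -> ty -> Prop :=
| teq_atom : forall a, teq (TAtom a) (TAtom a)
| teq_arr : forall M N s t, mteq M N -> teq s t -> teq (TArr M s) (TArr N t)
with mteq : mset -> mset -> Prop :=
| mteq_nil : mteq [] []
| mteq_cons : forall a b M N1 N2,
    teq a b -> mteq M (N1 ++ N2) -> mteq (a :: M) (N1 ++ b :: N2).

(* Environments: total maps var -> multiset; dom Γ = {x | Γ x <> []}. *)
Definition env := var -> mset.

Definition env_eq (G D : env) : Prop := forall x, mteq (G x) (D x).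

Definition env_union (G D : env) : env := fun x => G x ++ D x.

(* Γ ; x : M  (used only when x ∉ dom Γ) *)
Definition env_ext (G : env) (x : var) (M : mset) : env :=
  fun z => if Nat.eqb z x then M else G z.

Definition env_single (x : var) (M : mset) : env :=
  fun z => if Nat.eqb z x then M else [].

Definition ch (M N : mset) : Prop :=
  (M <> [] /\ N = M) \/ (M = [] /\ exists tau, N = [tau]).

Inductive tyj : env -> term -> ty -> Prop :=
| ty_var : forall x s, tyj (env_single x [s]) (Var x) s
| ty_abs : forall G x M t s,
    G x = [] -> tyj (env_ext G x M) t s -> tyj G (Lam x t) (TArr M s)
| ty_app : forall (L : list (mset * ty)) G D Lam0 t u y r s A B,
    ch (map (fun p => TArr (fst p) (snd p)) L) A ->
    mtyj G t A ->
    ch (concat (map fst L)) B ->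
    mtyj D u B ->
    Lam0 y = [] ->
    tyj (env_ext Lam0 y (map snd L)) r s ->
    tyj (env_union (env_union G D) Lam0) (GApp t u y r) s
(* judgments are taken up to equality of multisets *)
| ty_eq : forall G G' t s s',
    tyj G t s -> env_eq G G' -> teq s s' -> tyj G' t s'
with mtyj : env -> term -> mset -> Prop :=
(* rule (many), with a nonempty index set I, presented by induction on I *)
| many_one : forall G t s, tyj G t s -> mtyj G t [s]
| many_cons : forall G D t s M,
    tyj G t s -> mtyj D t M -> mtyj (env_union G D) t (s :: M).

(* A
   variable is typable at every type and an abstraction λx.t gets the type
   Γ(x) → σ from any typing Γ ⊢ t : σ.  For t(u, y.r) take a typing
   Λ ⊢ r : σ with Λ(y) = [τ_i]_i and any type σ_u of u: since t ∈ m_var is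
   typable at every type, it receives [[σ_u] → τ_i]_i, u receives ⊔_i [σ_u],
   and (app) concludes.  The choice operator ch only matters when Λ(y) is
   empty, where the arbitrary types are again supplied by these facts. *)

From Stdlib Require Import List PeanoNat FunctionalExtensionality.
Import ListNotations.

Scheme is_m_mut := Induction for is_m Sort Prop
with is_mvar_mut := Induction for is_mvar Sort Prop.
Combined Scheme is_m_is_mvar_ind from is_m_mut, is_mvar_mut.

Lemma env_ext_at (G : env) x M : env_ext G x M x = M.
Proof. unfold env_ext; now rewrite Nat.eqb_refl. Qed.

Lemma env_ext_twice (G : env) x M N : env_ext (env_ext G x M) x N = env_ext G x N.
Proof.
  apply functional_extensionality; intro z; unfold env_ext.
  now destruct (Nat.eqb z x).
Qed.

Lemma env_ext_id (G : env) x : env_ext G x (G x) = G.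
Proof.
  apply functional_extensionality; intro z; unfold env_ext.
  destruct (Nat.eqb_spec z x); now subst.
Qed.

Lemma tyj_Lam G t x s : tyj G t s -> tyj (env_ext G x []) (Lam x t) (TArr (G x) s).
Proof.
  intro Ht; apply ty_abs; [apply env_ext_at |].
  now rewrite env_ext_twice, env_ext_id.
Qed.

Lemma mtyj_of_nonempty t (M : mset) :
  M <> [] -> (forall s, In s M -> exists G, tyj G t s) -> exists G, mtyj G t M.
Proof.
  induction M as [| s M IH]; intros HM Htyp; [congruence |].
  destruct (Htyp s (or_introl eq_refl)) as [Gs Hs].
  destruct M as [| s' M].
  - exists Gs; now apply many_one.
  - destruct IH as [GM HGM]; [discriminate | intros; apply Htyp; now right |].
    exists (env_union Gs GM); now apply many_cons.
Qed.

Definition ch_default (d : ty) (M : mset) : mset :=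
  match M with [] => [d] | _ => M end.

Lemma ch_ch_default d M : ch M (ch_default d M).
Proof.
  destruct M as [| s M]; [right; split; [| exists d] | left; split; [discriminate |]]; reflexivity.
Qed.

Lemma mtyj_ch_default t d (M : mset) :
  (exists G, tyj G t d) -> (forall s, In s M -> exists G, tyj G t s) ->
  exists G, mtyj G t (ch_default d M).
Proof.
  intros Hd HM; apply mtyj_of_nonempty.
  - destruct M; discriminate.
  - destruct M as [| s M]; [intros s' [<- | []] |]; auto.
Qed.

Lemma tyj_GApp_of_universal_head t u y r Gu su Gr s :
  (forall s', exists G, tyj G t s') -> tyj Gu u su -> tyj Gr r s ->
  exists G, tyj G (GApp t u y r) s.
Proof.
  intros Ht Hu Hr.
  set (L := map (fun tau => ([su], tau)) (Gr y)).
  set (arrows := map (fun p => TArr (fst p) (snd p)) L).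
  set (args := concat (map fst L)).
  destruct (mtyj_ch_default t (TAtom 0) arrows) as [G HG]; [apply Ht | intros; apply Ht |].
  destruct (mtyj_ch_default u su args) as [D HD]; [eauto | |].
  { intros s' Hs'; exists Gu.
    unfold args, L in Hs'; rewrite map_map in Hs'; simpl in Hs'.
    apply in_concat in Hs'; destruct Hs' as [l [Hl Hs']].
    apply in_map_iff in Hl; destruct Hl as [tau [<- _]].
    now destruct Hs' as [<- | []]. }
  exists (env_union (env_union G D) (env_ext Gr y [])).
  apply (ty_app L G D _ t u y r s _ _ (ch_ch_default _ _) HG (ch_ch_default _ _) HD).
  - apply env_ext_at.
  - unfold L; rewrite map_map, map_id, env_ext_twice, env_ext_id; exact Hr.
Qed.

Theorem mainTheorem12 :
  (forall t : term, is_m t -> exists (G : env) (s : ty), tyj G t s) /\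
  (forall t : term, is_mvar t -> forall s : ty, exists G : env, tyj G t s).
Proof.
  apply is_m_is_mvar_ind.
  - intro x; exists (env_single x [TAtom 0]), (TAtom 0); apply ty_var.
  - intros x t _ [G [s Hs]]; exists (env_ext G x []), (TArr (G x) s); now apply tyj_Lam.
  - intros t u y r _ Ht _ [Gu [su Hu]] _ [Gr [s Hr]].
    destruct (tyj_GApp_of_universal_head t u y r Gu su Gr s) as [G HG]; eauto.
  - intros x s; exists (env_single x [s]); apply ty_var.
  - intros t u y r _ Ht _ [Gu [su Hu]] _ Hr s.
    destruct (Hr s) as [Gr HGr]; eapply tyj_GApp_of_universal_head; eauto.
Qed.
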